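(* Let $n\ge 1$ and $a\ge 0$ be integers with $a\le n$. Then \[ \sum_{l=0}^{a}(1-l)\,e_l\,X_{P_{n-l}}=\begin{cases}X_{K_{a+1}^{n-1-a}}\big/a!, & \text{if } a\le n-1,\\ e_n, & \text{if } a=n.\end{cases} \]
   Context: The chromatic symmetric function of a finite simple graph $G$ is $X_G=\sum_{\kappa}\prod_{v\in V(G)}x_{\kappa(v)}$, where $\kappa$ ranges over proper colorings $\kappa:V(G)\to\{1,2,\dots\}$; the empty graph has $X=1$. $e_l$ is the $l$-th elementary symmetric function, $e_0=1$. $P_j$ is the path on $j$ vertices ($P_0$ empty). $K_{s}^{t}$ is the lollipop: the complete graph $K_s$ with a pendant path of length $t$ (with $t$ new vertices) attached at one vertex. *)

From mathcomp Require Import all_boot all_order all_algebra.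
From mathcomp Require Import mpoly.
Set Implicit Arguments. Unset Strict Implicit. Unset Printing Implicit Defensive.
Import GRing.Theory.
Local Open Scope ring_scope.

(* A finite simple graph on a finType V is given by its adjacency relation
   (expected symmetric and irreflexive). *)

(* Chromatic symmetric function X_G, restricted to the first N variables
   x_1..x_N (i.e. colours 'I_N).  Identities of symmetric functions are
   equivalent to the corresponding identities in every finite number N of
   variables. *)
Definition proper_col (V : finType) (e : rel V) (N : nat)
  (k : {ffun V -> 'I_N}) : bool :=
  [forall u, forall v, e u v ==> (k u != k v)].

Definition chromN (R : comNzRingType) (N : nat) (V : finType) (e : rel V)
  : {mpoly R[N]} :=
  \sum_(k : {ffun V -> 'I_N} | proper_col e k) \prod_(v : V) 'X_(k v).

Definition path_rel (j : nat) : rel 'I_j :=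
  fun u v => (u.+1 == v :> nat) || (v.+1 == u :> nat).

(* Lollipop K_s^t on vertices 0..s+t-1: vertices 0..s-1 form K_s, and
   s-1, s, ..., s+t-1 form a pendant path of length t attached at s-1. *)
Definition lollipop_rel (s t : nat) : rel 'I_(s + t) :=
  fun u v => ((u < s)%N && (v < s)%N && (u != v))
          || (((u.+1 == v :> nat) || (v.+1 == u :> nat)) && (s <= maxn u v)%N).

Arguments path_rel j : clear implicits.
Arguments lollipop_rel s t : clear implicits.

From mathcomp Require Import all_boot all_order all_algebra.
From mathcomp Require Import mpoly.
From mathcomp Require Import perm.
From mathcomp Require Import zify ring.
Import GRing.Theory Num.Theory.
Set Implicit Arguments. Unset Strict Implicit. Unset Printing Implicit Defensive.
Local Open Scope ring_scope.

(* Split X_G according to the colour c of a root vertex.  Attaching a pendant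
   vertex to the root acts on these rooted parts by the linear operator
   f |-> (c |-> x_c * sum_(d <> c) f d).  Let Y_m(c) be the rooted part of X(K_m).
   A proper colouring of K_(p+2) whose root has colour c is an injective colouring
   of K_(p+1) avoiding c, and by symmetry the injective colourings of K_(p+1) that
   do use c contribute (p+1) Y_(p+1)(c); with X(K_m) = m! e_m this gives
     Y_(p+2)(c) = (p+1) (pendant Y_(p+1))(c) - p (p+1)! e_(p+1) x_c.
   Attaching t more pendant vertices and summing over c yields
     X(K_(p+2)^t) = (p+1) X(K_(p+1)^(t+1)) - p (p+1)! e_(p+1) X(P_(t+1)),
   from which the identity follows by induction on a. *)

Lemma natr_fact_neq0 (F : numDomainType) m : (m`!%:R : F) != 0.
Proof. by rewrite pnatr_eq0 -lt0n fact_gt0. Qed.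

Section RootedChromatic.
Variables (R : comNzRingType) (N : nat).

Definition colmono n (k : {ffun 'I_n -> 'I_N}) : {mpoly R[N]} := \prod_i 'X_(k i).

Definition extcol n (k : {ffun 'I_n -> 'I_N}) (c : 'I_N) : {ffun 'I_n.+1 -> 'I_N} :=
  [ffun i => if unlift ord_max i is Some j then k j else c].

Lemma extcol_max n k c : @extcol n k c ord_max = c.
Proof. by rewrite ffunE unlift_none. Qed.

Lemma extcol_lift n k c j : @extcol n k c (lift ord_max j) = k j.
Proof. by rewrite ffunE liftK. Qed.

Lemma sum_ffunS n (F : {ffun 'I_n.+1 -> 'I_N} -> {mpoly R[N]}) :
  \sum_k F k = \sum_(k : {ffun 'I_n -> 'I_N}) \sum_c F (extcol k c).
Proof.
rewrite pair_big (reindex (fun p => extcol p.1 p.2)) //=.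
exists (fun k => ([ffun j => k (lift ord_max j)], k ord_max)) => [[k c] _ | k _].
- by rewrite extcol_max; congr pair; apply/ffunP => j; rewrite ffunE extcol_lift.
- apply/ffunP => i; rewrite ffunE.
  by case: unliftP => [j ->| ->]; rewrite ?ffunE.
Qed.

Lemma colmono_extcol n k c : colmono (@extcol n k c) = colmono k * 'X_c.
Proof.
rewrite /colmono big_ord_recr /= extcol_max; congr (_ * _).
apply: eq_bigr => i _.
have -> : widen_ord (leqnSn n) i = lift ord_max i by apply: ord_inj; rewrite lift_max.
by rewrite extcol_lift.
Qed.

Lemma eq_chromN (V : finType) (e e' : rel V) : e =2 e' -> chromN R N e = chromN R N e'.
Proof.
move=> ee'; apply: eq_bigl => k.
by apply: eq_forallb => u; apply: eq_forallb => v; rewrite ee'.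
Qed.

(* A relation on nat stands for the family of its restrictions to the initial
   segments 'I_n; the root of the restriction to 'I_n.+1 is its last vertex n. *)
Definition restr_rel n (r : rel nat) : rel 'I_n := fun u v => r u v.
Arguments restr_rel n r : clear implicits.

Definition chrom_last (r : rel nat) n (c : 'I_N) : {mpoly R[N]} :=
  \sum_(k : {ffun 'I_n.+1 -> 'I_N} | proper_col (restr_rel n.+1 r) k && (k ord_max == c))
    colmono k.

Lemma chromN_sum_last r n : chromN R N (restr_rel n.+1 r) = \sum_c chrom_last r n c.
Proof. exact: (partition_big (fun k : {ffun 'I_n.+1 -> 'I_N} => k ord_max) xpredT). Qed.

Lemma eq_chrom_last n (r r' : rel nat) :
  (forall u v : 'I_n.+1, r u v = r' u v) -> chrom_last r n =1 chrom_last r' n.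
Proof.
move=> rr' c; apply: eq_bigl => k; congr andb.
by apply: eq_forallb => u; apply: eq_forallb => v; rewrite /restr_rel rr'.
Qed.

Definition pendant (f : 'I_N -> {mpoly R[N]}) (c : 'I_N) : {mpoly R[N]} :=
  'X_c * \sum_(d | d != c) f d.

Lemma eq_pendant f g : f =1 g -> pendant f =1 pendant g.
Proof. by move=> fg c; congr (_ * _); apply: eq_bigr. Qed.

Lemma pendant_lincomb (u v : {mpoly R[N]}) f g c :
  pendant (fun d => u * f d - v * g d) c = u * pendant f c - v * pendant g c.
Proof. by rewrite /pendant sumrB -!mulr_sumr; ring. Qed.

Section SimpleGraph.
Variable r : rel nat.
Hypotheses (r_sym : ssrbool.symmetric r) (r_irr : irreflexive r).

Lemma proper_extcol n k c :
  proper_col (restr_rel n.+1 r) (extcol k c)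
  = proper_col (restr_rel n r) k && [forall j : 'I_n, r j n ==> (k j != c)].
Proof.
apply/forallP/andP => [proper_ext | [/forallP proper_k /forallP avoid_c] u].
- split; apply/forallP => u; [apply/forallP => v|].
  + by have := forallP (proper_ext (lift ord_max u)) (lift ord_max v);
      rewrite !extcol_lift /restr_rel !lift_max.
  + by have := forallP (proper_ext (lift ord_max u)) ord_max;
      rewrite extcol_lift extcol_max /restr_rel lift_max.
apply/forallP => v; rewrite /restr_rel.
case: (unliftP ord_max u) => [u' ->| ->]; case: (unliftP ord_max v) => [v' ->| ->];
  rewrite ?extcol_lift ?extcol_max ?lift_max /=.
- exact: (forallP (proper_k u')).
- exact: avoid_c.
- by rewrite r_sym eq_sym; apply: avoid_c.
- by rewrite r_irr.
Qed.

Lemma chrom_last_avoid n c :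
  chrom_last r n c = 'X_c * \sum_(k : {ffun 'I_n -> 'I_N} |
    proper_col (restr_rel n r) k && [forall j : 'I_n, r j n ==> (k j != c)]) colmono k.
Proof.
rewrite /chrom_last big_mkcond sum_ffunS mulr_sumr [RHS]big_mkcond.
apply: eq_bigr => k _.
rewrite (bigD1 c) //= big1 => [|d /negbTE dc]; last by rewrite extcol_max dc andbF.
rewrite extcol_max eqxx andbT proper_extcol colmono_extcol addr0.
by case: ifP; rewrite ?mulr0 // mulrC.
Qed.

Lemma chrom_last0 c : chrom_last r 0 c = 'X_c.
Proof.
rewrite chrom_last_avoid (big_pred1 [ffun=> c]) => [|k /=]; last first.
  rewrite (_ : k = [ffun=> c]) ?eqxx; last by apply/ffunP => -[].
  by apply/andP; split; apply/forallP => -[].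
by rewrite /colmono big_ord0 mulr1.
Qed.

Lemma chrom_last_pendant n c :
  (forall j : 'I_n.+1, r j n.+1 = (j == n :> nat)) ->
  chrom_last r n.+1 c = pendant (chrom_last r n) c.
Proof.
move=> nbr_last; rewrite chrom_last_avoid; congr (_ * _).
have avoid_last (k : {ffun 'I_n.+1 -> 'I_N}) :
    [forall j : 'I_n.+1, r j n.+1 ==> (k j != c)] = (k ord_max != c).
  apply/forallP/idP => [/(_ ord_max)|k_max j]; first by rewrite nbr_last eqxx.
  rewrite nbr_last; apply/implyP => /eqP j_n.
  by rewrite (_ : j = ord_max) //; apply: val_inj.
under eq_bigl do rewrite avoid_last.
rewrite (partition_big (fun k : {ffun 'I_n.+1 -> 'I_N} => k ord_max) (fun d => d != c));
  last by move=> k /andP[].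
apply: eq_bigr => d dc; apply: eq_bigl => k.
by case: (k ord_max =P d) => [->|]; rewrite ?dc ?andbT ?andbF.
Qed.

End SimpleGraph.

Definition clique_nat : rel nat := fun u v => u != v.

Lemma proper_clique n (k : {ffun 'I_n -> 'I_N}) :
  proper_col (restr_rel n clique_nat) k = injectiveb k.
Proof.
apply/forallP/injectiveP => [proper_k u v kuv | k_inj u].
- apply/val_inj/eqP/negPn.
  by have := forallP (proper_k u) v; rewrite kuv eqxx implybF.
- by apply/forallP => v; apply/implyP/contra => /eqP/k_inj ->.
Qed.

Lemma sum_injective_colmono s :
  \sum_(k : {ffun 'I_s -> 'I_N} | injectiveb k) colmono k = s`!%:R * mesym N R s.
Proof.
rewrite (partition_big (fun k : {ffun 'I_s -> 'I_N} => k @: 'I_s) (fun A => #|A| == s)) /=;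
  last by move=> k /injectiveP k_inj; rewrite card_imset ?card_ord.
rewrite /mesym mulr_sumr; apply: eq_bigr => A /eqP cardA.
rewrite [LHS](eq_bigr (fun _ => \prod_(i in A) 'X_i)); last first.
  move=> k /andP[/injectiveP k_inj /eqP <-].
  by rewrite /colmono big_imset //= => i j _ _ /k_inj.
rewrite sumr_const mulr_natl; congr (_ *+ _).
have -> : s`! = #|A| ^_ #|'I_s| by rewrite cardA card_ord ffactnn.
rewrite -card_inj_ffuns_on; apply: eq_card => k.
rewrite unfold_in !inE [RHS]andbC; apply: andb_id2l => /injectiveP k_inj.
apply/eqP/forallP => [<- i | k_A]; first exact: imset_f.
apply/eqP; rewrite eqEcard card_imset // cardA card_ord leqnn andbT.
by apply/subsetP => _ /imsetP[i _ ->].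
Qed.

Lemma chromN_clique s : chromN R N (restr_rel s clique_nat) = s`!%:R * mesym N R s.
Proof. by rewrite -sum_injective_colmono; apply: eq_bigl => k; rewrite proper_clique. Qed.

Lemma sum_injective_at p (j : 'I_p.+1) c :
  \sum_(k : {ffun 'I_p.+1 -> 'I_N} | injectiveb k && (k j == c)) colmono k
  = chrom_last clique_nat p c.
Proof.
rewrite /chrom_last; under [RHS]eq_bigl do rewrite proper_clique.
pose t := tperm j ord_max.
pose swap (k : {ffun 'I_p.+1 -> 'I_N}) := [ffun i => k (t i)].
have swapK : involutive swap by move=> k; apply/ffunP => i; rewrite !ffunE tpermK.
rewrite [RHS](reindex_inj (inv_inj swapK)); apply: eq_big => k.
- rewrite ffunE tpermR; congr andb.
  apply/injectiveP/injectiveP => k_inj u v; first by rewrite !ffunE => /k_inj /perm_inj.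
  by move=> kuv; apply: (@perm_inj _ t); apply: k_inj; rewrite !ffunE !tpermK.
- move=> _; rewrite /colmono (reindex_inj (@perm_inj _ t)) /=.
  by apply: eq_bigr => i _; rewrite ffunE.
Qed.

Lemma sum_injective_hit p c :
  \sum_(k : {ffun 'I_p.+1 -> 'I_N} | injectiveb k && [exists j, k j == c]) colmono k
  = p.+1%:R * chrom_last clique_nat p c.
Proof.
rewrite mulr_natl -[p.+1 in RHS]card_ord -sumr_const.
under [RHS]eq_bigr => j _ do rewrite -(sum_injective_at j) big_mkcondr.
rewrite exchange_big /= big_mkcondr; apply: eq_bigr => k /injectiveP k_inj.
case: existsP => [[j /eqP kj]|no_j].
- rewrite (bigD1 j) /= ?kj ?eqxx // big1 ?addr0 // => i ij.
  by case: eqP => // ki; case/eqP: ij; apply: k_inj; rewrite ki kj.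
- by rewrite big1 // => i _; case: eqP => // ki; case: no_j; exists i; apply/eqP.
Qed.

Lemma chrom_last_clique p c :
  chrom_last clique_nat p.+1 c
  = p.+1%:R * pendant (chrom_last clique_nat p) c
    - (p * p.+1`!)%:R * mesym N R p.+1 * 'X_c.
Proof.
have clique_sym : ssrbool.symmetric clique_nat by move=> u v; rewrite /clique_nat eq_sym.
have clique_irr : irreflexive clique_nat by move=> u; rewrite /clique_nat eqxx.
have sum_all : \sum_d chrom_last clique_nat p d = p.+1`!%:R * mesym N R p.+1.
  by rewrite -chromN_sum_last chromN_clique.
have proper_avoid (k : {ffun 'I_p.+1 -> 'I_N}) :
    proper_col (restr_rel p.+1 clique_nat) k
      && [forall j : 'I_p.+1, clique_nat j p.+1 ==> (k j != c)]
    = injectiveb k && ~~ [exists j, k j == c].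
  rewrite proper_clique negb_exists; congr andb; apply: eq_forallb => j.
  by rewrite /clique_nat neq_ltn ltn_ord.
have sum_avoid :
    \sum_(k : {ffun 'I_p.+1 -> 'I_N} | injectiveb k && ~~ [exists j, k j == c]) colmono k
    = p.+1`!%:R * mesym N R p.+1 - p.+1%:R * chrom_last clique_nat p c.
  rewrite -sum_injective_colmono -sum_injective_hit.
  rewrite [in RHS](bigID (fun k : {ffun 'I_p.+1 -> 'I_N} => [exists j, k j == c])).
  by rewrite addrAC subrr add0r.
have pendant_c : pendant (chrom_last clique_nat p) c
    = 'X_c * (p.+1`!%:R * mesym N R p.+1 - chrom_last clique_nat p c).
  by rewrite /pendant -sum_all [in RHS](bigD1 c) //= [chrom_last _ _ c + _]addrC addrK.
rewrite chrom_last_avoid //; under eq_bigl do rewrite proper_avoid.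
rewrite sum_avoid pendant_c natrM; ring.
Qed.

Definition path_nat : rel nat := fun u v => (u.+1 == v) || (v.+1 == u).

Definition lollipop_nat s : rel nat := fun u v =>
  ((u < s) && (v < s) && (u != v))%N || (((u.+1 == v) || (v.+1 == u)) && (s <= maxn u v))%N.

Lemma path_nat_sym : ssrbool.symmetric path_nat.
Proof. by move=> u v; rewrite /path_nat orbC. Qed.

Lemma path_nat_irr : irreflexive path_nat.
Proof. by move=> u; apply/negP; rewrite /path_nat; lia. Qed.

Lemma chromN_path t : chromN R N (path_rel t.+1) = \sum_c chrom_last path_nat t c.
Proof. exact: chromN_sum_last. Qed.

Lemma chromN_lollipop s t :
  chromN R N (lollipop_rel s.+1 t) = \sum_c chrom_last (lollipop_nat s.+1) (s + t) c.
Proof. exact: chromN_sum_last. Qed.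

Lemma chrom_last_path_succ t c :
  chrom_last path_nat t.+1 c = pendant (chrom_last path_nat t) c.
Proof.
apply: chrom_last_pendant => [||[j /= ?]]; [exact: path_nat_sym | exact: path_nat_irr|].
by rewrite /path_nat; apply/idP/idP; lia.
Qed.

Lemma chrom_last_lollipop_succ s t c :
  chrom_last (lollipop_nat s.+1) (s + t.+1) c
  = pendant (chrom_last (lollipop_nat s.+1) (s + t)) c.
Proof.
rewrite addnS; apply: chrom_last_pendant => [u v|u|[j /= ?]]; rewrite /lollipop_nat.
- by apply/idP/idP; lia.
- by apply/negP; lia.
- by apply/idP/idP; lia.
Qed.

Lemma chrom_last_lollipop_clique s :
  chrom_last (lollipop_nat s.+1) s =1 chrom_last clique_nat s.
Proof.
apply: eq_chrom_last => -[u /= ?] [v /= ?].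
by rewrite /lollipop_nat /clique_nat; apply/idP/idP; lia.
Qed.

Lemma chrom_last_lollipop_rec p t c :
  chrom_last (lollipop_nat p.+2) (p.+1 + t) c
  = p.+1%:R * chrom_last (lollipop_nat p.+1) (p + t.+1) c
    - (p * p.+1`!)%:R * mesym N R p.+1 * chrom_last path_nat t c.
Proof.
elim: t c => [|t IH] c.
  rewrite !addn0 chrom_last_lollipop_clique chrom_last_clique.
  rewrite chrom_last0; [|exact: path_nat_sym|exact: path_nat_irr].
  rewrite (chrom_last_lollipop_succ p 0) addn0.
  by rewrite (eq_pendant (@chrom_last_lollipop_clique p)).
rewrite chrom_last_lollipop_succ (eq_pendant IH) pendant_lincomb.
by rewrite -chrom_last_lollipop_succ -chrom_last_path_succ.
Qed.

Lemma chromN_lollipop_rec p t :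
  chromN R N (lollipop_rel p.+2 t)
  = p.+1%:R * chromN R N (lollipop_rel p.+1 t.+1)
    - (p * p.+1`!)%:R * mesym N R p.+1 * chromN R N (path_rel t.+1).
Proof.
rewrite !chromN_lollipop chromN_path.
rewrite (eq_bigr _ (fun c _ => chrom_last_lollipop_rec p t c)).
by rewrite sumrB -!mulr_sumr.
Qed.

Lemma chromN_lollipop_path t : chromN R N (lollipop_rel 1 t) = chromN R N (path_rel t.+1).
Proof.
apply: eq_chromN => -[u ?] [v ?].
by rewrite /lollipop_rel /path_rel -val_eqE /=; apply/idP/idP; lia.
Qed.

Lemma chromN_lollipop_clique m : chromN R N (lollipop_rel m 0) = m`!%:R * mesym N R m.
Proof.
rewrite -[in RHS](addn0 m) -chromN_clique; apply: eq_chromN => -[u /= ?] [v /= ?].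
by rewrite /lollipop_rel /restr_rel /clique_nat -val_eqE /=; apply/idP/idP; lia.
Qed.

Lemma chromN_path0 : chromN R N (path_rel 0) = 1.
Proof.
rewrite /chromN (big_pred1 (ffun0 (card_ord 0))) => [|k /=]; first by rewrite big_ord0.
rewrite (_ : k = ffun0 (card_ord 0)) ?eqxx; last by apply/ffunP => -[].
by apply/forallP => -[].
Qed.

End RootedChromatic.

Lemma sum_path_lollipop (F : numFieldType) (N a t : nat) :
  \sum_(l < a.+1)
     ((1 - (l : nat)%:R) *: (mesym N F l * chromN F N (path_rel ((a + t).+1 - l)%N)))
  = ((a`!)%:R^-1 : F) *: chromN F N (lollipop_rel a.+1 t).
Proof.
elim: a t => [|a IH] t.
  by rewrite big_ord1 subn0 mesym0E mul1r subr0 invr1 !scale1r chromN_lollipop_path.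
rewrite big_ord_recr /= addSnnS IH (_ : (a + t.+1).+1 - a.+1 = t.+1)%N; last by lia.
rewrite chromN_lollipop_rec -mulrA !mulr_natl -!scaler_nat scalerBr !scalerA -scaleNr.
have succ_neq0 : (1 + a%:R : F) != 0 by rewrite addrC natr1 pnatr_eq0.
congr (_ *: _ + _ *: _); rewrite factS !natrM.
- by field; rewrite natr_fact_neq0.
- by field; rewrite natr_fact_neq0.
Qed.

Theorem lemma4p4 (N n a : nat) (hn : (1 <= n)%N) (han : (a <= n)%N) :
  \sum_(l < a.+1)
     ((1 - (l : nat)%:R) *: (mesym N rat l * chromN rat N (path_rel (n - l)%N)))
  = if (a <= n.-1)%N
    then ((a`!)%:R^-1 : rat) *: chromN rat N (lollipop_rel a.+1 (n.-1 - a)%N)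
    else mesym N rat n.
Proof.
case: ifP => [a_le_pn | /negbT a_gt_pn].
  have [t ->] : exists t, n = (a + t).+1 by exists (n.-1 - a)%N; lia.
  by rewrite (_ : (a + t).+1.-1 - a = t)%N ?sum_path_lollipop //; lia.
have {a_gt_pn han} -> : a = n by lia.
case: n hn => // m _.
rewrite big_ord_recr /=; have := sum_path_lollipop rat N m 0; rewrite addn0 => ->.
rewrite subnn chromN_lollipop_clique chromN_path0 mulr1.
rewrite mulr_natl -scaler_nat scalerA -scalerDl (_ : _ + _ = 1) ?scale1r //.
by rewrite factS natrM; field; rewrite natr_fact_neq0.
Qed.
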